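(* Fix any total budget $\mathrm{TB}\in\mathbb N_0$. For all integers $n,m\in\mathbb Z$, the disjunctive sum of the integer game forms $(n)+(m)$ equals the integer game form $(n+m)$.
   Context: Game forms are defined recursively: $G=\{G^{\mathcal L}\mid G^{\mathcal R}\}$ with finite sets of Left and Right options, and finite birthday. Integer game forms: $(0)=\{\varnothing\mid\varnothing\}$; for $n\in\mathbb N$, $(n)=\{(n-1)\mid\varnothing\}$ and $(-n)=\overline{(n)}=\{\varnothing\mid(-(n-1))\}$, where the conjugate is $\bar G=\{\overline{G^{\mathcal R}}\mid\overline{G^{\mathcal L}}\}$. The budget set for total budget $\mathrm{TB}$ is $\mathcal B=\{0,\dots,\mathrm{TB},\hat 0,\dots,\widehat{\mathrm{TB}}\}$: state $p$ (resp. $\hat p$) means Left holds $p$ dollars and Right holds $\mathrm{TB}-p$, and Right (resp. Left) holds the tie-breaking marker. Play of $(G,\tilde p)$: at every position (terminal ones included) both players bid simultaneously, Left $\ell\in\{0,\dots,p\}$, Right $r\in\{0,\dots,\mathrm{TB}-p\}$. If Left holds the marker (state $\hat p$): if $\ell>r$ Left moves to $(G^L,\widehat{p-\ell})$, or, including the marker (allowed when $\ell\ge r$), to $(G^L,p-\ell)$; if $\ell=r$ Left wins, the marker passes to Right, play continues at $(G^L,p-\ell)$; if $\ell<r$ Right moves to $(G^R,\widehat{p+r})$. Symmetrically when Right holds the marker (state $p$): if $r>\ell$ Right moves to $(G^R,p+r)$ or, including the marker, to $(G^R,\widehat{p+r})$; if $r=\ell$ Right wins, the marker passes to Left, play continues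 at $(G^R,\widehat{p+r})$; if $r<\ell$ Left moves to $(G^L,p-\ell)$. A player who wins a bid but has no option loses. $o(G,\tilde p)\in\{\mathrm L,\mathrm R\}$ is the winner under optimal play; $\mathrm L>\mathrm R$. Disjunctive sum $G+H=\{G^{\mathcal L}+H,G+H^{\mathcal L}\mid G^{\mathcal R}+H,G+H^{\mathcal R}\}$. $G\ge H$ means $o(G+X,\tilde p)\ge o(H+X,\tilde p)$ for all game forms $X$ and all $\tilde p\in\mathcal B$; $G=H$ means $G\ge H$ and $H\ge G$. *)

From mathcomp Require Import all_boot all_algebra.
Set Implicit Arguments. Unset Strict Implicit. Unset Printing Implicit Defensive.

(* Game forms: finite lists of Left and Right options; finite birthday is
   automatic since the type is inductive. *)
Inductive game : Type := Game : seq game -> seq game -> game.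

Definition leftOpts (G : game) : seq game := let: Game l _ := G in l.
Definition rightOpts (G : game) : seq game := let: Game _ r := G in r.

Fixpoint conjg (G : game) : game :=
  match G with Game l r => Game (map conjg r) (map conjg l) end.

Fixpoint gsum (G : game) : game -> game :=
  fix gsumG (H : game) : game :=
    match G, H with
    | Game gl gr, Game hl hr =>
        Game (map (fun g => gsum g H) gl ++ map gsumG hl)
             (map (fun g => gsum g H) gr ++ map gsumG hr)
    end.

Fixpoint nat_game (n : nat) : game :=
  match n with 0 => Game [::] [::] | n'.+1 => Game [:: nat_game n'] [::] end.

Definition int_game (z : int) : game :=
  match z with Posz n => nat_game n | Negz n => conjg (nat_game n.+1) end.

(* Budget state: [p] = Left's dollars (Right holds TB - p); [lm] = true means
   Left holds the tie-breaking marker (the hatted state \hat p),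
   false means Right holds it (state p). *)

(* Outcome: true = L (Left wins), false = R.  Left wins iff Left has a bid
   such that, for every Right bid, the resolution leads to a Left win, where
   the bid winner picks (optimally) an option and, when allowed, whether to
   hand over the marker.  A bid winner without options loses. *)
Fixpoint outcome (TB : nat) (G : game) (p : nat) (lm : bool) {struct G} : bool :=
  match G with
  | Game gl gr =>
    let oL := fun (p' : nat) (lm' : bool) => has (fun g => outcome TB g p' lm') gl in
    let oR := fun (p' : nat) (lm' : bool) => all (fun g => outcome TB g p' lm') gr in
    has (fun l =>
      all (fun r =>
        if lm then
          if r < l then oL (p - l) true || oL (p - l) false
          else if l == r then oL (p - l) false
          else oR (p + r) true
        else
          if l < r then oR (p + r) false && oR (p + r) true
          else if l == r then oR (p + r) true
          else oL (p - l) false)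
        (iota 0 (TB - p).+1))
      (iota 0 p.+1)
  end.

(* Order on outcomes: L > R, i.e. implication on booleans. *)
Definition game_ge (TB : nat) (G H : game) : Prop :=
  forall (X : game) (p : nat) (lm : bool), p <= TB ->
    (outcome TB (gsum H X) p lm ==> outcome TB (gsum G X) p lm).

Definition game_eq (TB : nat) (G H : game) : Prop :=
  game_ge TB G H /\ game_ge TB H G.

(* Both sides are compared inside an arbitrary context X, by induction on
   |n| + |m| and on X, through their options.  Up to the induction hypothesis
   the options coincide, except that when n and m have opposite signs (n) + (m)
   has an extra option: e.g. for n > 0 >= n + m, the Left option
   (n - 1) + (m) + X, which behaves like ((n + m) + X) + (-1).  Such an option
   never helps Left, because whenever W + (-1) is a Left win so is some Left
   option of W.  This rests on two facts about bidding: outcomes are monotone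
   in Left's budget, and one free move (adding 1) is worth at least the
   tie-breaking marker. *)

From mathcomp Require Import all_boot all_algebra zify.
From Stdlib Require List.
Set Implicit Arguments. Unset Strict Implicit. Unset Printing Implicit Defensive.
Import GRing.Theory.

Fixpoint game_ind_In (P : game -> Prop)
    (IH : forall gl gr, (forall g, List.In g gl -> P g) ->
                        (forall g, List.In g gr -> P g) -> P (Game gl gr))
    (G : game) : P G :=
  let fix opts (gs : seq game) : forall g, List.In g gs -> P g :=
    match gs with
    | [::] => fun g (gin : False) => False_ind (P g) gin
    | x :: gs' => fun g gin =>
        match gin with
        | or_introl ex => eq_ind x P (game_ind_In IH x) g ex
        | or_intror gin' => opts gs' g gin'
        end
    end in
  let: Game gl gr := G in IH gl gr (opts gl) (opts gr).

Section SeqIn.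
Variables (T : Type) (s : seq T).

Lemma sub_has_In (a1 a2 : pred T) :
  (forall x, List.In x s -> a1 x -> a2 x) -> has a1 s -> has a2 s.
Proof.
move=> a12 /List.existsb_exists [x [sx a1x]].
by apply/List.existsb_exists; exists x; split; last exact: a12.
Qed.

Lemma sub_all_In (a1 a2 : pred T) :
  (forall x, List.In x s -> a1 x -> a2 x) -> all a1 s -> all a2 s.
Proof.
move=> a12 /List.forallb_forall a1s; apply/List.forallb_forall => x sx.
exact/a12/a1s.
Qed.

Lemma eq_has_In (a1 a2 : pred T) :
  (forall x, List.In x s -> a1 x = a2 x) -> has a1 s = has a2 s.
Proof. by move=> a12; apply/idP/idP; apply: sub_has_In => x /a12 ->. Qed.

Lemma eq_all_In (a1 a2 : pred T) :
  (forall x, List.In x s -> a1 x = a2 x) -> all a1 s = all a2 s.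
Proof. by move=> a12; apply/idP/idP; apply: sub_all_In => x /a12 ->. Qed.

End SeqIn.

Lemma has_if_seq1 T (a : pred T) (b : bool) x :
  has a (if b then [:: x] else [::]) = b && a x.
Proof. by case: b; rewrite /= ?orbF. Qed.

Lemma all_if_seq1 T (a : pred T) (b : bool) x :
  all a (if b then [:: x] else [::]) = b ==> a x.
Proof. by case: b; rewrite /= ?andbT. Qed.

Lemma leftOpts_gsum G H :
  leftOpts (gsum G H) = map (gsum^~ H) (leftOpts G) ++ map (gsum G) (leftOpts H).
Proof. by case: G; case: H. Qed.

Lemma rightOpts_gsum G H :
  rightOpts (gsum G H) = map (gsum^~ H) (rightOpts G) ++ map (gsum G) (rightOpts H).
Proof. by case: G; case: H. Qed.

Lemma gsumg0 G : gsum G (int_game 0) = G.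
Proof.
elim/game_ind_In: G => gl gr IHl IHr /=; rewrite !cats0.
by congr Game; rewrite -[RHS]List.map_id; apply: List.map_ext_in.
Qed.

Lemma gsum_int1 gl gr : gsum (Game gl gr) (int_game 1) =
  Game (rcons (map (gsum^~ (int_game 1)) gl) (Game gl gr))
       (map (gsum^~ (int_game 1)) gr).
Proof. by rewrite -{2}(gsumg0 (Game gl gr)) -cats1 /= !cats0. Qed.

Lemma gsum_intN1 gl gr : gsum (Game gl gr) (int_game (-1)%R) =
  Game (map (gsum^~ (int_game (-1)%R)) gl)
       (rcons (map (gsum^~ (int_game (-1)%R)) gr) (Game gl gr)).
Proof. by rewrite -{2}(gsumg0 (Game gl gr)) -cats1 /= !cats0. Qed.

Lemma leftOpts_int_game (k : int) :
  leftOpts (int_game k) = if (0 < k)%R then [:: int_game (k - 1)%R] else [::].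
Proof. by case: k => [[|n]|n] //=; rewrite subn1. Qed.

Lemma rightOpts_int_game (k : int) :
  rightOpts (int_game k) = if (k < 0)%R then [:: int_game (k + 1)%R] else [::].
Proof. by case: k => [[|n]|[|n]] //=; rewrite subn1. Qed.

Section Bidding.
Variable TB : nat.

Definition resolve (oL oR : nat -> bool -> bool) (p : nat) (lm : bool) (l r : nat) :=
  if lm then
    if r < l then oL (p - l) true || oL (p - l) false
    else if l == r then oL (p - l) false
    else oR (p + r) true
  else
    if l < r then oR (p + r) false && oR (p + r) true
    else if l == r then oR (p + r) true
    else oL (p - l) false.
Arguments resolve : simpl never.

Definition bidding (oL oR : nat -> bool -> bool) (p : nat) (lm : bool) :=
  has (fun l => all (resolve oL oR p lm l) (iota 0 (TB - p).+1)) (iota 0 p.+1).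

Definition win_some (gs : seq game) (p : nat) (lm : bool) :=
  has (fun g => outcome TB g p lm) gs.

Definition win_all (gs : seq game) (p : nat) (lm : bool) :=
  all (fun g => outcome TB g p lm) gs.

Lemma win_some_rcons gs g p lm :
  win_some (rcons gs g) p lm = outcome TB g p lm || win_some gs p lm.
Proof. exact: has_rcons. Qed.

Lemma win_all_rcons gs g p lm :
  win_all (rcons gs g) p lm = outcome TB g p lm && win_all gs p lm.
Proof. exact: all_rcons. Qed.

Lemma outcomeE gl gr p lm :
  outcome TB (Game gl gr) p lm = bidding (win_some gl) (win_all gr) p lm.
Proof. by []. Qed.

Section Resolve.
Variables (oL oR : nat -> bool -> bool) (p l r : nat).

Lemma resolveT_lt : l < r -> resolve oL oR p true l r = oR (p + r) true.
Proof. by move=> lr; rewrite /resolve ltnNge (ltnW lr) ltn_eqF. Qed.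

Lemma resolveT_eq : l = r -> resolve oL oR p true l r = oL (p - l) false.
Proof. by move=> <-; rewrite /resolve ltnn eqxx. Qed.

Lemma resolveT_gt : r < l -> resolve oL oR p true l r = oL (p - l) true || oL (p - l) false.
Proof. by move=> rl; rewrite /resolve rl. Qed.

Lemma resolveF_lt : l < r -> resolve oL oR p false l r = oR (p + r) false && oR (p + r) true.
Proof. by move=> lr; rewrite /resolve lr. Qed.

Lemma resolveF_eq : l = r -> resolve oL oR p false l r = oR (p + r) true.
Proof. by move=> <-; rewrite /resolve ltnn eqxx. Qed.

Lemma resolveF_gt : r < l -> resolve oL oR p false l r = oL (p - l) false.
Proof. by move=> rl; rewrite /resolve ltnNge (ltnW rl) gtn_eqF. Qed.

End Resolve.

Lemma biddingP oL oR p lm :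
  reflect (exists2 l, l <= p & forall r, r <= TB - p -> resolve oL oR p lm l r)
          (bidding oL oR p lm).
Proof.
apply: (iffP hasP) => [[l] | [l lp Hl]].
  rewrite mem_iota ltnS => lp /allP Hl; exists l => // r rp.
  by apply: Hl; rewrite mem_iota ltnS.
exists l; first by rewrite mem_iota ltnS.
by apply/allP => r; rewrite mem_iota ltnS; apply: Hl.
Qed.

Lemma bidding_mono (oL1 oR1 oL2 oR2 : nat -> bool -> bool) p lm :
  (forall q m, q <= TB -> oL1 q m -> oL2 q m) ->
  (forall q m, q <= TB -> oR1 q m -> oR2 q m) ->
  p <= TB -> bidding oL1 oR1 p lm -> bidding oL2 oR2 p lm.
Proof.
move=> L12 R12 pTB /biddingP [l lp Hl]; apply/biddingP; exists l => // r rp.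
have {}L12 m : oL1 (p - l) m -> oL2 (p - l) m by apply: L12; lia.
have {}R12 m : oR1 (p + r) m -> oR2 (p + r) m by apply: R12; lia.
move/(_ r rp): Hl; rewrite /resolve; case: lm; repeat case: ifP => _;
  by [case/orP => /L12 ->; rewrite ?orbT | case/andP => /R12 -> /R12 -> | apply: L12 | apply: R12].
Qed.

(* Left's position improves with more dollars; the marker may only be traded
   for at least one dollar. *)
Definition state_le (p : nat) (lm : bool) (q : nat) (lm' : bool) :=
  if lm == lm' then p <= q else lm && (p < q).
Arguments state_le p lm q lm' /.

Lemma outcome_mono X p lm q lm' :
  outcome TB X p lm -> state_le p lm q lm' -> q <= TB -> outcome TB X q lm'.
Proof.
elim/game_ind_In: X p lm q lm' => xl xr IHl IHr p lm q lm'.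
rewrite !outcomeE => /biddingP [l lp Hl] le_pq qTB; apply/biddingP.
have monoL a m b m' : win_some xl a m -> state_le a m b m' -> b <= TB -> win_some xl b m'.
  by move=> + ab bTB; apply: sub_has_In => x /IHl IHx /IHx; apply.
have monoR a m b m' : win_all xr a m -> state_le a m b m' -> b <= TB -> win_all xr b m'.
  by move=> + ab bTB; apply: sub_all_In => x /IHr IHx /IHx; apply.
(* Right's bid r at the richer state q is matched by the bid r + (q - p) at p,
   which leads to the same budget q + r when Right wins. *)
have outbid r : r <= TB - q -> p <= q ->
    resolve (win_some xl) (win_all xr) p lm l (r + (q - p)) /\ p + (r + (q - p)) = q + r.
  by move=> rq pq; split; [apply: Hl | ]; lia.
move: le_pq => /=; case: lm Hl outbid; case: lm' => Hl outbid //= pq;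
  (exists l; first lia); move=> r rq; case: (ltngtP l r) => lr.
- have [] := outbid r rq pq; rewrite !resolveT_lt; try lia.
  by move=> xr_win <-.
- have /Hl : r <= TB - p by lia.
  rewrite !resolveT_gt // => /orP [] /monoL xl_win; apply/orP; [left | right];
    apply: xl_win => /=; lia.
- have /Hl : r <= TB - p by lia.
  by rewrite !resolveT_eq // => /monoL; apply => /=; lia.
- rewrite resolveF_lt //; apply/andP; split.
    have /Hl : r + (q - p) - 1 <= TB - p by lia.
    by rewrite resolveT_lt; [move/monoR; apply => /= | ]; lia.
  have [] := outbid r rq (ltnW pq); rewrite resolveT_lt; last lia.
  by move=> xr_win <-.
- have /Hl : r <= TB - p by lia.
  by rewrite resolveT_gt // resolveF_gt // => /orP [] /monoL; apply => /=; lia.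
- have [] := outbid r rq (ltnW pq); rewrite resolveT_lt ?resolveF_eq //; last lia.
  by move=> xr_win <-.
- have [] := outbid r rq pq; rewrite !resolveF_lt; try lia.
  by move=> xr_win <-.
- have /Hl : r <= TB - p by lia.
  by rewrite !resolveF_gt // => /monoL; apply => /=; lia.
- rewrite resolveF_eq //; case: (ltnP p q) => [pq' | qp].
    have [] := outbid r rq (ltnW pq'); rewrite resolveF_lt; last lia.
    by case/andP=> _ xr_win <-.
  have /Hl : r <= TB - p by lia.
  by rewrite resolveF_eq // (_ : q = p) //; lia.
Qed.

Lemma win_some_mono gs p lm q lm' :
  win_some gs p lm -> state_le p lm q lm' -> q <= TB -> win_some gs q lm'.
Proof. by move=> + pq qTB; apply: sub_has_In => g _ /outcome_mono; apply. Qed.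

Lemma win_all_mono gs p lm q lm' :
  win_all gs p lm -> state_le p lm q lm' -> q <= TB -> win_all gs q lm'.
Proof. by move=> + pq qTB; apply: sub_all_In => g _ /outcome_mono; apply. Qed.

Lemma outcome_gsum1 Y p lm :
  outcome TB Y p lm -> p <= TB -> outcome TB (gsum Y (int_game 1)) p lm.
Proof.
elim/game_ind_In: Y p lm => yl yr IHl IHr p lm Y_win pTB.
rewrite gsum_int1 outcomeE; apply: bidding_mono Y_win => // q m qTB.
  rewrite win_some_rcons /win_some has_map => yl_win; apply/orP; right.
  by apply: sub_has_In yl_win => y /IHl IHy /IHy; apply.
by rewrite /win_all all_map; apply: sub_all_In => y /IHr IHy /IHy; apply.
Qed.

Lemma outcome_gsumN1 Y p lm :
  outcome TB (gsum Y (int_game (-1)%R)) p lm -> p <= TB -> outcome TB Y p lm.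
Proof.
elim/game_ind_In: Y p lm => yl yr IHl IHr p lm + pTB.
rewrite gsum_intN1 outcomeE; apply: bidding_mono => // q m qTB.
  by rewrite /win_some has_map; apply: sub_has_In => y /IHl IHy /IHy; apply.
rewrite win_all_rcons /win_all all_map => /andP [_].
by apply: sub_all_In => y /IHr IHy /IHy; apply.
Qed.

Lemma win_some_gsum1 gs p lm :
  win_some gs p lm -> p <= TB -> win_some (map (gsum^~ (int_game 1)) gs) p lm.
Proof.
by move=> + pTB; rewrite /win_some has_map; apply: sub_has_In => g _ /outcome_gsum1; apply.
Qed.

Lemma win_all_gsum1 gs p lm :
  win_all gs p lm -> p <= TB -> win_all (map (gsum^~ (int_game 1)) gs) p lm.
Proof.
by move=> + pTB; rewrite /win_all all_map; apply: sub_all_In => g _ /outcome_gsum1; apply.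
Qed.

Lemma win_some_gsumN1 gs p lm :
  win_some (map (gsum^~ (int_game (-1)%R)) gs) p lm -> p <= TB -> win_some gs p lm.
Proof.
by rewrite /win_some has_map => + pTB; apply: sub_has_In => g _ /outcome_gsumN1; apply.
Qed.

Lemma win_all_gsumN1 gs p lm :
  win_all (map (gsum^~ (int_game (-1)%R)) gs) p lm -> p <= TB -> win_all gs p lm.
Proof.
by rewrite /win_all all_map => + pTB; apply: sub_all_In => g _ /outcome_gsumN1; apply.
Qed.

Lemma outcome_gsum1_marker Y p :
  outcome TB Y p false -> p <= TB -> outcome TB (gsum Y (int_game 1)) p true.
Proof.
case: Y => yl yr Y_win pTB; move: (Y_win); rewrite outcomeE => /biddingP [l lp Hl].
rewrite gsum_int1 outcomeE; apply/biddingP; exists l => // r rp.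
case: (ltngtP l r) => lr; move/(_ r rp): (Hl).
- rewrite resolveF_lt // resolveT_lt // => /andP [_ /win_all_gsum1]; apply; lia.
- rewrite resolveF_gt // resolveT_gt // !win_some_rcons => /win_some_gsum1 yl_win.
  by rewrite yl_win ?orbT //; lia.
- rewrite resolveT_eq // win_some_rcons => _.
  have [-> | l_gt0] := posnP l; first by rewrite subn0 Y_win.
  by move/(_ 0 (leq0n _)): Hl; rewrite resolveF_gt // => /win_some_gsum1 ->; rewrite ?orbT //; lia.
Qed.

Lemma outcome_gsumN1_marker Y p :
  outcome TB (gsum Y (int_game (-1)%R)) p false -> p <= TB -> outcome TB Y p true.
Proof.
case: Y => yl yr; rewrite gsum_intN1 outcomeE => /biddingP [l lp Hl] pTB.
have [l0 | l_gt0] := posnP l.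
  by move/(_ 0 (leq0n _)): Hl; rewrite resolveF_eq // addn0 win_all_rcons => /andP [].
rewrite outcomeE; apply/biddingP; exists l => // r rp.
case: (ltngtP l r) => lr.
- move/(_ r rp): Hl; rewrite resolveF_lt // resolveT_lt // !win_all_rcons.
  by case/andP => _ /andP [_ /win_all_gsumN1]; apply; lia.
- move/(_ r rp): Hl; rewrite resolveF_gt // resolveT_gt // => /win_some_gsumN1 ->; lia.
- move/(_ 0 (leq0n _)): Hl; rewrite resolveF_gt // resolveT_eq // => /win_some_gsumN1; apply; lia.
Qed.

Lemma outcome_of_rightOpts_marker X p :
  win_all (rightOpts X) p true -> p <= TB -> outcome TB X p false.
Proof.
case: X => xl xr xr_win pTB; have {}xr_win : win_all xr p true := xr_win.
rewrite outcomeE; apply/biddingP.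
exists 0 => // -[|r] rp; first by rewrite resolveF_eq // addn0.
by rewrite resolveF_lt //; apply/andP; split; apply: (win_all_mono xr_win) => /=; lia.
Qed.

Lemma leftOpts_of_outcome_marker X p :
  outcome TB X p true -> p <= TB -> win_some (leftOpts X) p false.
Proof.
case: X => xl xr; rewrite outcomeE => /biddingP [l lp Hl] pTB.
move/(_ 0 (leq0n _)): Hl; case: l lp => [|l] lp; first by rewrite resolveT_eq // subn0.
by rewrite resolveT_gt // => /orP [] /win_some_mono; apply => /=; lia.
Qed.

Lemma outcome_gsum1_of_rightOpts W p lm :
  win_all (rightOpts W) p lm -> p <= TB -> outcome TB (gsum W (int_game 1)) p lm.
Proof.
case: W => wl wr wr_win pTB; have {}wr_win : win_all wr p lm := wr_win.
rewrite gsum_int1 outcomeE; apply/biddingP.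
have wr_win1 : win_all (map (gsum^~ (int_game 1)) wr) p true.
  case: lm wr_win => wr_win; first exact: win_all_gsum1.
  by rewrite /win_all all_map; apply: sub_all_In wr_win => w _ /outcome_gsum1_marker; apply.
exists 0 => // -[|r] rp; case: lm wr_win => wr_win.
- by rewrite resolveT_eq // subn0 win_some_rcons outcome_of_rightOpts_marker.
- by rewrite resolveF_eq // addn0.
- by rewrite resolveT_lt //; apply: (win_all_mono wr_win1) => /=; lia.
- rewrite resolveF_lt //; apply/andP; split.
    by apply: win_all_gsum1; [apply: (win_all_mono wr_win) => /= | ]; lia.
  by apply: (win_all_mono wr_win1) => /=; lia.
Qed.

Lemma leftOpts_of_outcome_gsumN1 W p lm :
  outcome TB (gsum W (int_game (-1)%R)) p lm -> p <= TB -> win_some (leftOpts W) p lm.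
Proof.
case: W => wl wr; rewrite gsum_intN1 outcomeE => /biddingP [l lp Hl] pTB.
move/(_ 0 (leq0n _)): Hl; case: l lp => [|l] lp; case: lm.
- rewrite resolveT_eq // subn0 /win_some has_map.
  by apply: sub_has_In => w _ /outcome_gsumN1_marker; apply.
- rewrite resolveF_eq // addn0 win_all_rcons => /andP [W_win _].
  exact: leftOpts_of_outcome_marker W_win pTB.
- have wl_win m : win_some (map (gsum^~ (int_game (-1)%R)) wl) (p - l.+1) m ->
      win_some wl (p - l.+1) true.
    rewrite /win_some has_map; apply: sub_has_In => w _.
    by case: m => [/outcome_gsumN1 | /outcome_gsumN1_marker]; apply; lia.
  by rewrite resolveT_gt // => /orP [] /wl_win /win_some_mono; apply => /=; lia.
- rewrite resolveF_gt // => /win_some_gsumN1 wl_win.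
  by apply: (win_some_mono (wl_win _)) => /=; lia.
Qed.

End Bidding.

Section Equivalence.
Variable TB : nat.

Definition eq_outcome (G H : game) :=
  forall p lm, p <= TB -> outcome TB G p lm = outcome TB H p lm.

Lemma eq_outcome_opts G H :
  (forall q m, q <= TB -> win_some TB (leftOpts G) q m = win_some TB (leftOpts H) q m) ->
  (forall q m, q <= TB -> win_all TB (rightOpts G) q m = win_all TB (rightOpts H) q m) ->
  eq_outcome G H.
Proof.
case: G H => [gl gr] [hl hr] eqL eqR p lm pTB; rewrite !outcomeE.
apply/idP/idP; apply: bidding_mono => // q m qTB;
  by rewrite (eqL _ _ qTB) || rewrite (eqR _ _ qTB).
Qed.

Lemma eq_outcome_gsumAC A B C : eq_outcome (gsum (gsum A B) C) (gsum (gsum A C) B).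
Proof.
elim/game_ind_In: A B C => al ar IHal IHar B.
elim/game_ind_In: B => bl br IHbl IHbr C.
elim/game_ind_In: C => cl cr IHcl IHcr.
apply: eq_outcome_opts => q m qTB.
  rewrite /win_some !leftOpts_gsum !map_cat !has_cat !has_map.
  rewrite (eq_has_In (fun a al_a => IHal a al_a _ _ q m qTB)).
  rewrite (eq_has_In (fun b bl_b => IHbl b bl_b _ q m qTB)).
  rewrite (eq_has_In (fun c cl_c => IHcl c cl_c q m qTB)).
  by rewrite -!orbA [X in _ || X]orbC.
rewrite /win_all !rightOpts_gsum !map_cat !all_cat !all_map.
rewrite (eq_all_In (fun a ar_a => IHar a ar_a _ _ q m qTB)).
rewrite (eq_all_In (fun b br_b => IHbr b br_b _ q m qTB)).
rewrite (eq_all_In (fun c cr_c => IHcr c cr_c q m qTB)).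
by rewrite -!andbA [X in _ && X]andbC.
Qed.

End Equivalence.

Section IntegerSums.
Variable TB : nat.
Local Open Scope ring_scope.

Section Step.
Variables (n m : int) (X : game).
Hypothesis IHnm : forall n' m' X', (`|n'| + `|m'| < `|n| + `|m|)%N ->
  eq_outcome TB (gsum (gsum (int_game n') (int_game m')) X') (gsum (int_game (n' + m')) X').
Hypothesis IHXl : forall x, List.In x (leftOpts X) ->
  eq_outcome TB (gsum (gsum (int_game n) (int_game m)) x) (gsum (int_game (n + m)) x).
Hypothesis IHXr : forall x, List.In x (rightOpts X) ->
  eq_outcome TB (gsum (gsum (int_game n) (int_game m)) x) (gsum (int_game (n + m)) x).

Lemma win_some_int_sum q lm : (q <= TB)%N ->
  win_some TB (leftOpts (gsum (gsum (int_game n) (int_game m)) X)) q lm =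
  win_some TB (leftOpts (gsum (int_game (n + m)) X)) q lm.
Proof.
move=> qTB; rewrite /win_some !leftOpts_gsum !map_cat !has_cat !has_map.
rewrite !leftOpts_int_game !has_if_seq1 /=.
set D := outcome TB (gsum (int_game (n + m - 1)) X) q lm.
set T := has (preim (gsum (int_game (n + m))) _) (leftOpts X).
have -> : has (preim (gsum (gsum (int_game n) (int_game m))) (fun g => outcome TB g q lm))
    (leftOpts X) = T by apply: eq_has_In => x /IHXl/(_ q lm qTB).
have -> : (0 < n) && outcome TB (gsum (gsum (int_game (n - 1)) (int_game m)) X) q lm =
    (0 < n) && D.
  by apply: andb_id2l => n_gt0; rewrite IHnm //; [rewrite addrAC | lia].
have -> : (0 < m) && outcome TB (gsum (gsum (int_game n) (int_game (m - 1))) X) q lm =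
    (0 < m) && D.
  by apply: andb_id2l => m_gt0; rewrite IHnm //; [rewrite addrA | lia].
have dominated : ~~ (0 < n + m) -> (0 < n) || (0 < m) -> D -> T.
  move=> nm_le0 nm_pos D_win.
  have : outcome TB (gsum (gsum (int_game (n + m)) X) (int_game (-1))) q lm.
    by rewrite eq_outcome_gsumAC // IHnm //; lia.
  move/leftOpts_of_outcome_gsumN1/(_ qTB).
  by rewrite /win_some leftOpts_gsum has_cat !has_map leftOpts_int_game (negbTE nm_le0).
case D_win: D; last by rewrite !andbF.
rewrite !andbT; case: (boolP (0 < n + m)) => [nm_pos | nm_le0].
  by rewrite (_ : (0 < n) || (0 < m)) //; lia.
case: (boolP ((0 < n) || (0 < m))) => [pos | _] //.
by rewrite (dominated nm_le0 pos D_win).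
Qed.

Lemma win_all_int_sum q lm : (q <= TB)%N ->
  win_all TB (rightOpts (gsum (gsum (int_game n) (int_game m)) X)) q lm =
  win_all TB (rightOpts (gsum (int_game (n + m)) X)) q lm.
Proof.
move=> qTB; rewrite /win_all !rightOpts_gsum !map_cat !all_cat !all_map.
rewrite !rightOpts_int_game !all_if_seq1 /=.
set U := outcome TB (gsum (int_game (n + m + 1)) X) q lm.
set T := all (preim (gsum (int_game (n + m))) _) (rightOpts X).
have -> : all (preim (gsum (gsum (int_game n) (int_game m))) (fun g => outcome TB g q lm))
    (rightOpts X) = T by apply: eq_all_In => x /IHXr/(_ q lm qTB).
have -> : (n < 0) ==> outcome TB (gsum (gsum (int_game (n + 1)) (int_game m)) X) q lm =
    (n < 0) ==> U.
  by apply: implyb_id2l => n_lt0; rewrite IHnm //; [rewrite addrAC | lia].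
have -> : (m < 0) ==> outcome TB (gsum (gsum (int_game n) (int_game (m + 1))) X) q lm =
    (m < 0) ==> U.
  by apply: implyb_id2l => m_lt0; rewrite IHnm //; [rewrite addrA | lia].
have dominated : ~~ (n + m < 0) -> (n < 0) || (m < 0) -> T -> U.
  move=> nm_ge0 nm_neg T_win.
  have W_win : win_all TB (rightOpts (gsum (int_game (n + m)) X)) q lm.
    by rewrite /win_all rightOpts_gsum all_cat !all_map rightOpts_int_game (negbTE nm_ge0).
  have := outcome_gsum1_of_rightOpts W_win qTB.
  by rewrite eq_outcome_gsumAC // IHnm //; lia.
case U_win: U; first by rewrite !implybT.
rewrite !implybF; case: (boolP (n + m < 0)) => [nm_lt0 | nm_ge0].
  by rewrite (_ : ~~ (n < 0) && ~~ (m < 0) = false) //; lia.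
case: (boolP ((n < 0) || (m < 0))) => [neg | ]; last by rewrite negb_or => ->.
case T_win: T; last by rewrite !andbF.
by rewrite (dominated nm_ge0 neg T_win) in U_win.
Qed.

End Step.

Lemma eq_outcome_int_sum n m X :
  eq_outcome TB (gsum (gsum (int_game n) (int_game m)) X) (gsum (int_game (n + m)) X).
Proof.
have [N] := ubnP (`|n| + `|m|)%N; elim: N n m X => // N IHN n m X nmN.
elim/game_ind_In: X => xl xr IHXl IHXr; apply: eq_outcome_opts => q lm qTB.
  by apply: win_some_int_sum => // n' m' X' lt_nm; apply: IHN; lia.
by apply: win_all_int_sum => // n' m' X' lt_nm; apply: IHN; lia.
Qed.

End IntegerSums.

Theorem mainTheorem14 (TB : nat) (n m : int) :
  game_eq TB (gsum (int_game n) (int_game m)) (int_game (n + m)%R).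
Proof. by split=> X p lm pTB; rewrite eq_outcome_int_sum // implybb. Qed.
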